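(* TDS is co-recursively-enumerable, i.e., the set of TDS instances that have no solution is recursively enumerable.
   Context: An instance of TDS consists of a rational discount factor $0<\lambda<1$, a rational target $t$, and rational weights $a,b$; a solution is an infinite sequence $w\in\{a,b\}^\omega$ with $\sum_{i=0}^\infty w(i)\lambda^i=t$. *)

From Stdlib Require Import QArith Reals List.
Import ListNotations.

(** A solution: an infinite word w over {a,b}, encoded as w : nat -> bool
    (true = letter a, false = letter b), with sum_{i>=0} w(i) lambda^i = t
    (the series is understood in the reals). *)
Definition tds_weight (a b : Q) (w : nat -> bool) (i : nat) : Q :=
  if w i then a else b.

Definition tds_solution (lam t a b : Q) (w : nat -> bool) : Prop :=
  infinite_sum (fun i => Q2R (tds_weight a b w i) * (Q2R lam) ^ i)%R (Q2R t).

Definition tds_valid_instance (lam : Q) : Prop := (0 < lam /\ lam < 1)%Q.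

Definition tds_has_solution (lam t a b : Q) : Prop :=
  exists w : nat -> bool, tds_solution lam t a b w.

(** * A model of computation: first-order recursive programs over exact
    rational arithmetic (mutually recursive functions, general recursion),
    with a fuel-indexed evaluator.  This is a Turing-complete model whose
    primitives (exact +, *, -, ^-1, <=, test for 0 on rationals) are all
    computable, so the domain of a program is a recursively enumerable set. *)
Inductive expr : Type :=
| EVar (i : nat)                      (* i-th argument of the current function *)
| EConst (q : Q)
| EAdd (e1 e2 : expr)
| EMul (e1 e2 : expr)
| EOpp (e : expr)
| EInv (e : expr)                     (* Qinv, with Qinv 0 = 0 *)
| ELe (e1 e2 : expr)                  (* 1 if e1 <= e2, else 0 *)
| EIf (c e1 e2 : expr)                (* e1 if c <> 0, else e2 *)
| ECall (f : nat) (args : list expr).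

(** A program is a list of function bodies; function 0 is the entry point. *)
Definition program := list expr.

Fixpoint option_all (l : list (option Q)) : option (list Q) :=
  match l with
  | [] => Some []
  | None :: _ => None
  | Some x :: r =>
      match option_all r with Some xs => Some (x :: xs) | None => None end
  end.

Fixpoint eval (fuel : nat) (p : program) (env : list Q) (e : expr)
  : option Q :=
  match fuel with
  | O => None
  | S k =>
    match e with
    | EVar i => nth_error env i
    | EConst q => Some q
    | EAdd e1 e2 =>
        match eval k p env e1, eval k p env e2 with
        | Some x, Some y => Some (x + y)%Q | _, _ => None end
    | EMul e1 e2 =>
        match eval k p env e1, eval k p env e2 with
        | Some x, Some y => Some (x * y)%Q | _, _ => None end
    | EOpp e1 =>
        match eval k p env e1 with Some x => Some (- x)%Q | None => None end
    | EInv e1 =>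
        match eval k p env e1 with Some x => Some (/ x)%Q | None => None end
    | ELe e1 e2 =>
        match eval k p env e1, eval k p env e2 with
        | Some x, Some y => Some (if Qle_bool x y then 1%Q else 0%Q)
        | _, _ => None end
    | EIf c e1 e2 =>
        match eval k p env c with
        | Some x => if Qeq_bool x 0 then eval k p env e2 else eval k p env e1
        | None => None
        end
    | ECall f args =>
        match nth_error p f with
        | None => None
        | Some body =>
            match option_all (map (eval k p env) args) with
            | Some vs => eval k p vs body
            | None => None
            end
        end
    end
  end.

Definition run (fuel : nat) (p : program) (inputs : list Q) : option Q :=
  match nth_error p 0 with
  | Some body => eval fuel p inputs body
  | None => None
  end.

Definition halts (p : program) (inputs : list Q) : Prop :=
  exists (fuel : nat) (v : Q), run fuel p inputs = Some v.

Definition re_set4 (P : Q -> Q -> Q -> Q -> Prop) : Prop :=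
  exists p : program,
    forall lam t a b : Q, halts p [lam; t; a; b] <-> P lam t a b.

(* After a finite prefix of a word, the state is its partial sum s together with the current
   discount p = lam^k, and every continuation has a value in the interval
   s + p [min(a,b), max(a,b)] / (1 - lam).  Call the instance refuted at depth m when t lies
   strictly outside this interval for all 2^m prefixes of length m.  A refutation rules out
   every solution.  Conversely, if no depth refutes the instance, then by Koenig's lemma some
   infinite word has no refuted prefix; t stays within O(lam^k) of its partial sums, so the
   word is a solution.  Refutation at a fixed depth is a finite computation in exact rational
   arithmetic, so the program that checks 0 < lam < 1 and then tries the depths
   m = 0, 1, 2, ... halts exactly on the valid instances without solution. *)

From Stdlib Require Import QArith Qreals Reals Lra Lia List Classical ClassicalEpsilon.
From Coquelicot Require Import Coquelicot.
Import ListNotations.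

Open Scope R_scope.

(** * Discounted sums of binary words *)

Lemma is_series_nonneg (a : nat -> R) (l : R) :
  (forall n, 0 <= a n) -> is_series a l -> 0 <= l.
Proof.
  intros Ha Hl.
  apply Rle_trans with (sum_n a 0); [rewrite sum_O; apply Ha |].
  apply (is_lim_seq_incr_compare (sum_n a) l Hl).
  intros n. rewrite sum_Sn. specialize (Ha (S n)). unfold plus; simpl. lra.
Qed.

Lemma is_series_geom_weighted (q lo hi v : R) (x : nat -> R) :
  0 <= q < 1 -> (forall i, lo <= x i <= hi) ->
  is_series (fun i => x i * q ^ i) v -> lo <= (1 - q) * v <= hi.
Proof.
  intros Hq Hx Hv.
  assert (Hshift : forall k, is_series (fun i => (x i - k) * q ^ i) (v - k / (1 - q))).
  { intros k.
    assert (Hgeom : is_series (fun i => k * q ^ i) (k / (1 - q))).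
    { apply (is_series_scal_l k (fun i => q ^ i)), is_series_geom.
      rewrite Rabs_right; lra. }
    apply (is_series_ext (fun i => x i * q ^ i - k * q ^ i));
      [intros i; symmetry; apply Rmult_minus_distr_r |].
    exact (is_series_minus _ _ _ _ Hv Hgeom). }
  assert (Hpow : forall i, 0 <= q ^ i) by (intros; apply pow_le; lra).
  assert (Hlo : 0 <= v - lo / (1 - q)).
  { refine (is_series_nonneg _ _ _ (Hshift lo)).
    intros i. specialize (Hx i). specialize (Hpow i). nra. }
  assert (Hhi : 0 <= - (v - hi / (1 - q))).
  { apply (is_series_nonneg (fun i => - ((x i - hi) * q ^ i))).
    - intros i. specialize (Hx i). specialize (Hpow i). nra.
    - exact (is_series_opp _ _ (Hshift hi)). }
  assert (Hdiv : forall k, (1 - q) * (k / (1 - q)) = k) by (intros; field; lra).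
  split; [rewrite <- (Hdiv lo) | rewrite <- (Hdiv hi)]; apply Rmult_le_compat_l; lra.
Qed.

Lemma is_lim_seq_geom_bound (u : nat -> R) (l K q : R) :
  Rabs q < 1 -> (forall n, Rabs (u n - l) <= K * q ^ n) -> is_lim_seq u l.
Proof.
  intros Hq Hu.
  assert (Hv : is_lim_seq (fun n => K * q ^ n) 0).
  { rewrite <- (Rmult_0_r K). apply (is_lim_seq_scal_l _ K 0), is_lim_seq_geom, Hq. }
  apply is_lim_seq_le_le with (u := fun n => l - K * q ^ n) (w := fun n => l + K * q ^ n).
  - intros n. apply Rabs_le_between', Hu.
  - rewrite <- (Rminus_0_r l) at 1. apply is_lim_seq_minus'; [apply is_lim_seq_const | exact Hv].
  - rewrite <- (Rplus_0_r l) at 1. apply is_lim_seq_plus'; [apply is_lim_seq_const | exact Hv].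
Qed.

Section BinaryTrajectories.
Variables (A : Type) (step : bool -> A -> A).

Fixpoint trajectory (x : A) (w : nat -> bool) (n : nat) : A :=
  match n with
  | O => x
  | S n => step (w n) (trajectory x w n)
  end.

Variable G : A -> Prop.
Hypothesis G_step : forall x, G x -> G (step true x) \/ G (step false x).

Lemma exists_trajectory_forall (x : A) : G x -> exists w, forall n, G (trajectory x w n).
Proof.
  intros Gx.
  pose (choose y := if excluded_middle_informative (G (step true y)) then true else false).
  pose (greedy := fix greedy n := match n with
                  | O => x | S n => step (choose (greedy n)) (greedy n) end).
  exists (fun n => choose (greedy n)).
  assert (Htraj : forall n, trajectory x (fun n => choose (greedy n)) n = greedy n).
  { induction n as [|n IH]; [reflexivity | simpl; rewrite IH; reflexivity]. }
  intros n. rewrite Htraj. induction n as [|n IH]; [exact Gx |].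
  simpl. unfold choose at 1.
  destruct (excluded_middle_informative _) as [H | H]; [exact H |].
  destruct (G_step _ IH); [contradiction | assumption].
Qed.

End BinaryTrajectories.

Arguments trajectory {A} step x w n.

Section DiscountedSums.
Variables lam tau alpha beta : R.

Definition letter (x : bool) : R := if x then alpha else beta.

Definition term (w : nat -> bool) (i : nat) : R := letter (w i) * lam ^ i.

(* A state [(s, p)] is a partial sum [s] with the discount [p] of the next letter.  It is
   excluded when [tau] lies strictly on one side of both [s + p alpha / (1 - lam)] and
   [s + p beta / (1 - lam)]; the comparison is multiplied out by [1 - lam]. *)
Definition child (x : bool) (st : R * R) : R * R :=
  (fst st + letter x * snd st, snd st * lam).

Definition excluded (st : R * R) : Prop :=
  let d := (1 - lam) * (tau - fst st) in
  (d < snd st * alpha /\ d < snd st * beta) \/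
  (snd st * alpha < d /\ snd st * beta < d).

Fixpoint refuted (m : nat) (st : R * R) : Prop :=
  match m with
  | O => excluded st
  | S m => refuted m (child true st) /\ refuted m (child false st)
  end.

Definition unrefuted (st : R * R) : Prop := forall m, ~ refuted m st.

Hypothesis lam_pos : 0 < lam.
Hypothesis lam_lt_1 : lam < 1.

Lemma excluded_child (x : bool) (st : R * R) : excluded st -> excluded (child x st).
Proof.
  destruct st as [s p]. unfold excluded, child, letter; simpl.
  destruct x; intros [[H1 H2] | [H1 H2]]; [left | right | left | right]; split; nra.
Qed.

Lemma refuted_S (m : nat) (st : R * R) : refuted m st -> refuted (S m) st.
Proof.
  revert st; induction m as [|m IH]; intros st H.
  - split; apply excluded_child, H.
  - destruct H as [H1 H2]. split; apply IH; assumption.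
Qed.

Lemma refuted_le (m m' : nat) (st : R * R) :
  (m <= m')%nat -> refuted m st -> refuted m' st.
Proof. induction 1; auto using refuted_S. Qed.

Lemma is_series_term_tail (w : nat -> bool) (v : R) :
  is_series (term w) v ->
  is_series (term (fun i => w (S i))) ((v - letter (w O)) / lam).
Proof.
  intros Hv.
  assert (Hshift : is_series (fun i => term w (S i)) (v - letter (w O))).
  { apply is_series_incr_1. unfold plus; simpl.
    replace (v - letter (w O) + term w O) with v; [exact Hv |].
    unfold term; simpl. ring. }
  apply (is_series_ext (fun i => / lam * term w (S i))).
  - intros i. unfold term; simpl. field. lra.
  - unfold Rdiv. rewrite Rmult_comm. exact (is_series_scal_l _ _ _ Hshift).
Qed.

Lemma refuted_no_completion (m : nat) :
  forall (st : R * R) (w : nat -> bool) (v : R),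
  0 <= snd st -> refuted m st -> is_series (term w) v -> fst st + snd st * v <> tau.
Proof.
  induction m as [|m IH]; intros [s p] w v Hp Hm Hv; simpl in *.
  - assert (Hbound : forall lo hi, (forall i, lo <= letter (w i) <= hi) ->
                     lo <= (1 - lam) * v <= hi).
    { intros lo hi Hw.
      exact (is_series_geom_weighted lam lo hi v (fun i => letter (w i)) ltac:(lra) Hw Hv). }
    unfold excluded in Hm; simpl in Hm. intros E. subst tau.
    destruct (Rle_dec alpha beta).
    + specialize (Hbound alpha beta ltac:(intros i; unfold letter; destruct (w i); lra)). nra.
    + specialize (Hbound beta alpha ltac:(intros i; unfold letter; destruct (w i); lra)). nra.
  - destruct Hm as [Ha Hb].
    pose proof (is_series_term_tail w v Hv) as Htail.
    assert (Hp' : 0 <= p * lam) by nra.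
    replace (s + p * v) with (s + letter (w O) * p + p * lam * ((v - letter (w O)) / lam))
      by (field; lra).
    destruct (w O);
      [apply (IH (child true (s, p)) (fun i => w (S i)))
      | apply (IH (child false (s, p)) (fun i => w (S i)))]; assumption.
Qed.

Lemma unrefuted_child (st : R * R) :
  unrefuted st -> unrefuted (child true st) \/ unrefuted (child false st).
Proof.
  intros Hst. apply NNPP. intros Hnot.
  apply not_or_and in Hnot as [Ht Hf].
  apply not_all_ex_not in Ht as [m1 Hm1].
  apply not_all_ex_not in Hf as [m2 Hm2].
  apply NNPP in Hm1, Hm2.
  apply (Hst (S (Nat.max m1 m2))). split.
  - apply (refuted_le m1); [lia | exact Hm1].
  - apply (refuted_le m2); [lia | exact Hm2].
Qed.

Lemma trajectory_child_snd (w : nat -> bool) (n : nat) :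
  snd (trajectory child (0, 1) w n) = lam ^ n.
Proof. induction n as [|n IH]; simpl; [reflexivity | rewrite IH; ring]. Qed.

Lemma trajectory_child_fst (w : nat -> bool) (n : nat) :
  fst (trajectory child (0, 1) w (S n)) = sum_n (term w) n.
Proof.
  induction n as [|n IH].
  - rewrite sum_O. unfold term; simpl. ring.
  - transitivity (fst (trajectory child (0, 1) w (S n))
                  + letter (w (S n)) * snd (trajectory child (0, 1) w (S n))); [reflexivity |].
    rewrite IH, trajectory_child_snd, sum_Sn. unfold term, plus; simpl. ring.
Qed.

Lemma unexcluded_bound (st : R * R) :
  0 <= snd st -> ~ excluded st ->
  Rabs (fst st - tau) <= snd st * ((Rabs alpha + Rabs beta) / (1 - lam)).
Proof.
  destruct st as [s p]; simpl. intros Hp Hno. unfold excluded in Hno; simpl in Hno.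
  set (d := (1 - lam) * (tau - s)) in Hno.
  assert (Hd : Rabs d <= p * (Rabs alpha + Rabs beta)).
  { pose proof (Rabs_pos alpha). pose proof (Rabs_pos beta).
    pose proof (Rle_abs alpha). pose proof (Rle_abs beta).
    pose proof (Rabs_maj2 alpha). pose proof (Rabs_maj2 beta).
    apply Rabs_le.
    destruct (Rlt_dec d (p * alpha)), (Rlt_dec d (p * beta)),
      (Rlt_dec (p * alpha) d), (Rlt_dec (p * beta) d); try tauto; split; nra. }
  replace (s - tau) with (- d / (1 - lam)) by (unfold d; field; lra).
  assert (Hinv : 0 < / (1 - lam)) by (apply Rinv_0_lt_compat; lra).
  unfold Rdiv. rewrite Rabs_mult, Rabs_Ropp, (Rabs_right (/ (1 - lam))) by lra.
  pose proof (Rmult_le_compat_r (/ (1 - lam)) _ _ (Rlt_le _ _ Hinv) Hd). lra.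
Qed.

Lemma unrefuted_solution : unrefuted (0, 1) -> exists w, is_series (term w) tau.
Proof.
  intros H0.
  destruct (exists_trajectory_forall _ child unrefuted unrefuted_child (0, 1) H0) as [w Hw].
  exists w.
  set (K := (Rabs alpha + Rabs beta) / (1 - lam)).
  apply (is_lim_seq_geom_bound _ _ (lam * K) lam); [rewrite Rabs_right; lra |].
  intros n. rewrite <- trajectory_child_fst.
  replace (lam * K * lam ^ n) with (snd (trajectory child (0, 1) w (S n)) * K)
    by (rewrite trajectory_child_snd; simpl; ring).
  apply unexcluded_bound.
  - rewrite trajectory_child_snd. apply pow_le. lra.
  - exact (Hw (S n) O).
Qed.

Theorem refutable_iff_unsolvable :
  (exists m, refuted m (0, 1)) <-> ~ exists w, is_series (term w) tau.
Proof.
  split.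
  - intros [m Hm] [w Hw].
    apply (refuted_no_completion m (0, 1) w tau); simpl; [lra | exact Hm | exact Hw | ring].
  - intros Hno. apply NNPP. intros Hnot. apply Hno, unrefuted_solution.
    intros m Hm. apply Hnot. exists m. exact Hm.
Qed.

End DiscountedSums.

Open Scope Q_scope.

(** * Fuel-indexed evaluation *)

Section Evaluation.
Variable p : program.

Lemma option_all_eval_S (k : nat) (env : list Q) :
  (forall env e v, eval k p env e = Some v -> eval (S k) p env e = Some v) ->
  forall args vs, option_all (map (eval k p env) args) = Some vs ->
  option_all (map (eval (S k) p env) args) = Some vs.
Proof.
  intros IH. induction args as [|e args IHargs]; intros vs H; [exact H |]. simpl in *.
  destruct (eval k p env e) eqn:He; [rewrite (IH _ _ _ He) | discriminate].
  destruct (option_all (map (eval k p env) args)); [rewrite (IHargs _ eq_refl) | discriminate].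
  exact H.
Qed.

Lemma eval_S (k : nat) :
  forall env e v, eval k p env e = Some v -> eval (S k) p env e = Some v.
Proof.
  induction k as [|k IH]; intros env e v H; [discriminate |].
  destruct e as [i|q|e1 e2|e1 e2|e1|e1|e1 e2|c e1 e2|f args]; simpl in H;
    remember (S k) as k' eqn:Hk'; simpl; subst k'; try exact H.
  - destruct (eval k p env e1) eqn:E1, (eval k p env e2) eqn:E2; try discriminate.
    now rewrite (IH _ _ _ E1), (IH _ _ _ E2).
  - destruct (eval k p env e1) eqn:E1, (eval k p env e2) eqn:E2; try discriminate.
    now rewrite (IH _ _ _ E1), (IH _ _ _ E2).
  - destruct (eval k p env e1) eqn:E1; [now rewrite (IH _ _ _ E1) | discriminate].
  - destruct (eval k p env e1) eqn:E1; [now rewrite (IH _ _ _ E1) | discriminate].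
  - destruct (eval k p env e1) eqn:E1, (eval k p env e2) eqn:E2; try discriminate.
    now rewrite (IH _ _ _ E1), (IH _ _ _ E2).
  - destruct (eval k p env c) eqn:Ec; [rewrite (IH _ _ _ Ec) | discriminate].
    destruct (Qeq_bool q 0); apply IH, H.
  - destruct (nth_error p f); [| discriminate].
    destruct (option_all (map (eval k p env) args)) eqn:Eargs; [| discriminate].
    rewrite (option_all_eval_S k env IH _ _ Eargs). apply IH, H.
Qed.

Lemma eval_le (k k' : nat) (env : list Q) (e : expr) (v : Q) :
  (k <= k')%nat -> eval k p env e = Some v -> eval k' p env e = Some v.
Proof. induction 1; auto using eval_S. Qed.

Lemma option_all_eval_le (k k' : nat) (env : list Q) (args : list expr) (vs : list Q) :
  (k <= k')%nat -> option_all (map (eval k p env) args) = Some vs ->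
  option_all (map (eval k' p env) args) = Some vs.
Proof. induction 1; auto using option_all_eval_S, eval_S. Qed.

Definition evaluates_to (env : list Q) (e : expr) (v : Q) : Prop :=
  exists k, eval k p env e = Some v.

Definition evaluates_all_to (env : list Q) (args : list expr) (vs : list Q) : Prop :=
  exists k, option_all (map (eval k p env) args) = Some vs.

Lemma evaluates_to_det (env : list Q) (e : expr) (v v' : Q) (k : nat) :
  evaluates_to env e v -> eval k p env e = Some v' -> v' = v.
Proof.
  intros [k0 H0] H.
  pose proof (eval_le k0 (Nat.max k0 k) env e v ltac:(lia) H0).
  pose proof (eval_le k (Nat.max k0 k) env e v' ltac:(lia) H). congruence.
Qed.

Lemma evaluates_all_to_det (env : list Q) (args : list expr) (vs vs' : list Q) (k : nat) :
  evaluates_all_to env args vs -> option_all (map (eval k p env) args) = Some vs' -> vs' = vs.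
Proof.
  intros [k0 H0] H.
  pose proof (option_all_eval_le k0 (Nat.max k0 k) env args vs ltac:(lia) H0).
  pose proof (option_all_eval_le k (Nat.max k0 k) env args vs' ltac:(lia) H). congruence.
Qed.

Lemma evaluates_var (env : list Q) (i : nat) (v : Q) :
  nth_error env i = Some v -> evaluates_to env (EVar i) v.
Proof. now exists 1%nat. Qed.

Lemma evaluates_const (env : list Q) (q : Q) : evaluates_to env (EConst q) q.
Proof. now exists 1%nat. Qed.

Lemma evaluates_opp (env : list Q) (e : expr) (x : Q) :
  evaluates_to env e x -> evaluates_to env (EOpp e) (- x).
Proof. intros [k H]. exists (S k). simpl. now rewrite H. Qed.

Ltac join_fuel H1 H2 k1 k2 :=
  exists (S (Nat.max k1 k2)); simpl;
  rewrite (eval_le k1 (Nat.max k1 k2) _ _ _ ltac:(lia) H1),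
          (eval_le k2 (Nat.max k1 k2) _ _ _ ltac:(lia) H2).

Lemma evaluates_add (env : list Q) (e1 e2 : expr) (x y : Q) :
  evaluates_to env e1 x -> evaluates_to env e2 y -> evaluates_to env (EAdd e1 e2) (x + y).
Proof. intros [k1 H1] [k2 H2]. now join_fuel H1 H2 k1 k2. Qed.

Lemma evaluates_mul (env : list Q) (e1 e2 : expr) (x y : Q) :
  evaluates_to env e1 x -> evaluates_to env e2 y -> evaluates_to env (EMul e1 e2) (x * y).
Proof. intros [k1 H1] [k2 H2]. now join_fuel H1 H2 k1 k2. Qed.

Lemma evaluates_le (env : list Q) (e1 e2 : expr) (x y : Q) :
  evaluates_to env e1 x -> evaluates_to env e2 y ->
  evaluates_to env (ELe e1 e2) (if Qle_bool x y then 1 else 0).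
Proof. intros [k1 H1] [k2 H2]. now join_fuel H1 H2 k1 k2. Qed.

Lemma evaluates_if (env : list Q) (c e1 e2 : expr) (x v : Q) :
  evaluates_to env c x -> evaluates_to env (if Qeq_bool x 0 then e2 else e1) v ->
  evaluates_to env (EIf c e1 e2) v.
Proof.
  intros [k1 H1] [k2 H2]. exists (S (Nat.max k1 k2)). simpl.
  rewrite (eval_le k1 (Nat.max k1 k2) _ _ _ ltac:(lia) H1).
  destruct (Qeq_bool x 0); exact (eval_le k2 (Nat.max k1 k2) _ _ _ ltac:(lia) H2).
Qed.

Lemma evaluates_all_nil (env : list Q) : evaluates_all_to env [] [].
Proof. now exists O. Qed.

Lemma evaluates_all_cons (env : list Q) (e : expr) (args : list expr) (v : Q) (vs : list Q) :
  evaluates_to env e v -> evaluates_all_to env args vs ->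
  evaluates_all_to env (e :: args) (v :: vs).
Proof.
  intros [k1 H1] [k2 H2]. exists (Nat.max k1 k2). simpl.
  rewrite (eval_le k1 (Nat.max k1 k2) _ _ _ ltac:(lia) H1),
          (option_all_eval_le k2 (Nat.max k1 k2) _ _ _ ltac:(lia) H2).
  reflexivity.
Qed.

Lemma evaluates_call (env : list Q) (f : nat) (args : list expr) (body : expr)
    (vs : list Q) (v : Q) :
  nth_error p f = Some body -> evaluates_all_to env args vs -> evaluates_to vs body v ->
  evaluates_to env (ECall f args) v.
Proof.
  intros Hf [k1 H1] [k2 H2]. exists (S (Nat.max k1 k2)). simpl. rewrite Hf.
  rewrite (option_all_eval_le k1 (Nat.max k1 k2) _ _ _ ltac:(lia) H1).
  exact (eval_le k2 (Nat.max k1 k2) _ _ _ ltac:(lia) H2).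
Qed.

Lemma eval_if_inv (k : nat) (env : list Q) (c e1 e2 : expr) (v : Q) :
  eval (S k) p env (EIf c e1 e2) = Some v ->
  exists x, eval k p env c = Some x /\
            eval k p env (if Qeq_bool x 0 then e2 else e1) = Some v.
Proof.
  simpl. destruct (eval k p env c) as [x|]; [| discriminate].
  intros H. exists x. split; [reflexivity | now destruct (Qeq_bool x 0)].
Qed.

Lemma eval_call_inv (k : nat) (env : list Q) (f : nat) (args : list expr) (v : Q) :
  eval (S k) p env (ECall f args) = Some v ->
  exists body vs, nth_error p f = Some body /\
    option_all (map (eval k p env) args) = Some vs /\ eval k p vs body = Some v.
Proof.
  simpl. destruct (nth_error p f) as [body|]; [| discriminate].
  destruct (option_all (map (eval k p env) args)) as [vs|]; [| discriminate].
  intros H. now exists body, vs.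
Qed.

End Evaluation.

Definition Q_of_bool (b : bool) : Q := if b then 1 else 0.

Lemma Qeq_bool_Q_of_bool (b : bool) : Qeq_bool (Q_of_bool b) 0 = negb b.
Proof. now destruct b. Qed.

Definition Qltb (x y : Q) : bool := negb (Qle_bool y x).

Lemma Qltb_iff (x y : Q) : Qltb x y = true <-> x < y.
Proof.
  unfold Qltb. rewrite Bool.negb_true_iff, <- Bool.not_true_iff_false, Qle_bool_iff.
  split; [apply Qnot_le_lt | apply Qlt_not_le].
Qed.

Lemma Qltb_Rlt (x y : Q) : Qltb x y = true <-> (Q2R x < Q2R y)%R.
Proof. rewrite Qltb_iff. split; [apply Qlt_Rlt | apply Rlt_Qlt]. Qed.

Definition ESub (e1 e2 : expr) : expr := EAdd e1 (EOpp e2).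
Definition ENot (e : expr) : expr := ESub (EConst 1) e.
Definition EAnd (e1 e2 : expr) : expr := EMul e1 e2.
Definition EOr (e1 e2 : expr) : expr := ENot (EAnd (ENot e1) (ENot e2)).
Definition ELt (e1 e2 : expr) : expr := ENot (ELe e2 e1).

Section BooleanExpressions.
Variables (p : program) (env : list Q).

Lemma evaluates_sub (e1 e2 : expr) (x y : Q) :
  evaluates_to p env e1 x -> evaluates_to p env e2 y ->
  evaluates_to p env (ESub e1 e2) (x - y).
Proof. intros H1 H2. exact (evaluates_add p env _ _ _ _ H1 (evaluates_opp p env _ _ H2)). Qed.

Lemma evaluates_not (e : expr) (b : bool) :
  evaluates_to p env e (Q_of_bool b) -> evaluates_to p env (ENot e) (Q_of_bool (negb b)).
Proof.
  intros H. pose proof (evaluates_sub _ _ _ _ (evaluates_const p env 1) H). now destruct b.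
Qed.

Lemma evaluates_and (e1 e2 : expr) (b1 b2 : bool) :
  evaluates_to p env e1 (Q_of_bool b1) -> evaluates_to p env e2 (Q_of_bool b2) ->
  evaluates_to p env (EAnd e1 e2) (Q_of_bool (b1 && b2)).
Proof. intros H1 H2. pose proof (evaluates_mul p env _ _ _ _ H1 H2). now destruct b1, b2. Qed.

Lemma evaluates_or (e1 e2 : expr) (b1 b2 : bool) :
  evaluates_to p env e1 (Q_of_bool b1) -> evaluates_to p env e2 (Q_of_bool b2) ->
  evaluates_to p env (EOr e1 e2) (Q_of_bool (b1 || b2)).
Proof.
  intros H1 H2.
  pose proof (evaluates_not _ _
    (evaluates_and _ _ _ _ (evaluates_not _ _ H1) (evaluates_not _ _ H2))).
  now destruct b1, b2.
Qed.

Lemma evaluates_lt (e1 e2 : expr) (x y : Q) :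
  evaluates_to p env e1 x -> evaluates_to p env e2 y ->
  evaluates_to p env (ELt e1 e2) (Q_of_bool (Qltb x y)).
Proof. intros H1 H2. exact (evaluates_not _ _ (evaluates_le p env _ _ _ _ H2 H1)). Qed.

End BooleanExpressions.

Ltac solve_evaluates :=
  repeat match goal with
  | |- evaluates_to _ _ (EOr _ _) _ => eapply evaluates_or
  | |- evaluates_to _ _ (EAnd _ _) _ => eapply evaluates_and
  | |- evaluates_to _ _ (ELt _ _) _ => eapply evaluates_lt
  | |- evaluates_to _ _ (ESub _ _) _ => eapply evaluates_sub
  | |- evaluates_to _ _ (EAdd _ _) _ => eapply evaluates_add
  | |- evaluates_to _ _ (EMul _ _) _ => eapply evaluates_mul
  | |- evaluates_to _ _ (EConst _) _ => eapply evaluates_const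
  | |- evaluates_to _ _ (EVar _) _ => eapply evaluates_var; reflexivity
  | |- evaluates_all_to _ _ (_ :: _) _ => eapply evaluates_all_cons
  | |- evaluates_all_to _ _ [] _ => eapply evaluates_all_nil
  end.

(** * Exact rational refutation and the program searching for it *)

Definition validb (lam : Q) : bool := Qltb 0 lam && Qltb lam 1.

Definition excludedb (lam t a b s p : Q) : bool :=
  let d := (1 - lam) * (t - s) in
  (Qltb d (p * a) && Qltb d (p * b)) || (Qltb (p * a) d && Qltb (p * b) d).

Fixpoint refutesb (lam t a b : Q) (m : nat) (s p : Q) : bool :=
  match m with
  | O => excludedb lam t a b s p
  | S m => refutesb lam t a b m (s + a * p) (p * lam)
           && refutesb lam t a b m (s + b * p) (p * lam)
  end.

Lemma validb_iff (lam : Q) : validb lam = true <-> tds_valid_instance lam.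
Proof.
  unfold validb, tds_valid_instance. rewrite Bool.andb_true_iff, !Qltb_iff. reflexivity.
Qed.

Lemma excludedb_iff (lam t a b s p : Q) :
  excludedb lam t a b s p = true <->
  excluded (Q2R lam) (Q2R t) (Q2R a) (Q2R b) (Q2R s, Q2R p).
Proof.
  unfold excludedb, excluded; simpl.
  rewrite Bool.orb_true_iff, !Bool.andb_true_iff, !Qltb_Rlt, !Q2R_mult, !Q2R_minus,
    RMicromega.Q2R_1.
  reflexivity.
Qed.

Lemma refutesb_iff (lam t a b : Q) (m : nat) : forall s p,
  refutesb lam t a b m s p = true <->
  refuted (Q2R lam) (Q2R t) (Q2R a) (Q2R b) m (Q2R s, Q2R p).
Proof.
  induction m as [|m IH]; intros s p; [apply excludedb_iff |].
  simpl. rewrite Bool.andb_true_iff, !IH.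
  unfold child, letter; simpl. rewrite !Q2R_plus, !Q2R_mult. reflexivity.
Qed.

Lemma tds_solution_iff (lam t a b : Q) (w : nat -> bool) :
  tds_solution lam t a b w <-> is_series (term (Q2R lam) (Q2R a) (Q2R b) w) (Q2R t).
Proof.
  unfold tds_solution. rewrite <- is_series_Reals.
  split; apply is_series_ext; intros i; unfold term, letter, tds_weight; now destruct (w i).
Qed.

Lemma tds_unsolvable_iff_refutable (lam t a b : Q) :
  tds_valid_instance lam ->
  ~ tds_has_solution lam t a b <-> exists m, refutesb lam t a b m 0 1 = true.
Proof.
  intros [H0 H1]. apply Qlt_Rlt in H0, H1.
  rewrite RMicromega.Q2R_0 in H0. rewrite RMicromega.Q2R_1 in H1.
  assert (Hsol : tds_has_solution lam t a b <->
                 exists w, is_series (term (Q2R lam) (Q2R a) (Q2R b) w) (Q2R t)).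
  { unfold tds_has_solution. split; intros [w Hw]; exists w; apply tds_solution_iff, Hw. }
  rewrite Hsol, <- refutable_iff_unsolvable by assumption.
  split; intros [m Hm]; exists m;
    rewrite refutesb_iff, RMicromega.Q2R_0, RMicromega.Q2R_1 in *; exact Hm.
Qed.

(* Function 3 computes [Q_of_bool (refutesb lam t a b n s p)] on the arguments
   [n; s; p; lam; t; a; b]; function 2 returns once some depth [m >= n] refutes, on the
   arguments [n; lam; t; a; b]; function 1 diverges. *)
Definition gap_expr : expr := EMul (ESub (EConst 1) (EVar 3)) (ESub (EVar 4) (EVar 1)).

Definition excluded_expr : expr :=
  EOr (EAnd (ELt gap_expr (EMul (EVar 2) (EVar 5))) (ELt gap_expr (EMul (EVar 2) (EVar 6))))
      (EAnd (ELt (EMul (EVar 2) (EVar 5)) gap_expr) (ELt (EMul (EVar 2) (EVar 6)) gap_expr)).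

Definition child_args (x : expr) : list expr :=
  [ESub (EVar 0) (EConst 1); EAdd (EVar 1) (EMul x (EVar 2)); EMul (EVar 2) (EVar 3);
   EVar 3; EVar 4; EVar 5; EVar 6].

Definition refute_body : expr :=
  EIf (EVar 0)
      (EAnd (ECall 3 (child_args (EVar 5))) (ECall 3 (child_args (EVar 6))))
      excluded_expr.

Definition search_body : expr :=
  EIf (ECall 3 [EVar 0; EConst 0; EConst 1; EVar 1; EVar 2; EVar 3; EVar 4])
      (EConst 0)
      (ECall 2 [EAdd (EVar 0) (EConst 1); EVar 1; EVar 2; EVar 3; EVar 4]).

Definition diverge_body : expr := ECall 1 [].

Definition valid_expr : expr := EAnd (ELt (EConst 0) (EVar 0)) (ELt (EVar 0) (EConst 1)).

Definition entry_body : expr :=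
  EIf valid_expr (ECall 2 [EConst 0; EVar 0; EVar 1; EVar 2; EVar 3]) diverge_body.

Definition tds_refuter : program := [entry_body; diverge_body; search_body; refute_body].

Definition nQ (m : nat) : Q := inject_Z (Z.of_nat m).

Lemma nQ_succ (m : nat) : nQ m + 1 = nQ (S m).
Proof. unfold nQ, inject_Z, Qplus. f_equal; cbn [Qnum Qden]; lia. Qed.

Lemma nQ_pred (m : nat) : nQ (S m) - 1 = nQ m.
Proof. unfold nQ, inject_Z, Qminus, Qplus, Qopp. f_equal; cbn [Qnum Qden]; lia. Qed.

Lemma diverge_none (k : nat) (env : list Q) : eval k tds_refuter env diverge_body = None.
Proof. revert env. induction k as [|k IH]; intros env; [reflexivity | apply IH]. Qed.

Section Refuter.
Variables lam t a b : Q.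

Lemma refute_body_evaluates (m : nat) : forall s p,
  evaluates_to tds_refuter [nQ m; s; p; lam; t; a; b] refute_body
    (Q_of_bool (refutesb lam t a b m s p)).
Proof.
  induction m as [|m IH]; intros s p.
  - apply (evaluates_if _ _ _ _ _ (nQ 0)); [solve_evaluates |].
    change (Qeq_bool (nQ 0) 0) with true; cbv iota.
    unfold excluded_expr, gap_expr, excludedb. solve_evaluates.
  - apply (evaluates_if _ _ _ _ _ (nQ (S m))); [solve_evaluates |].
    change (Qeq_bool (nQ (S m)) 0) with false; cbv iota.
    simpl refutesb. solve_evaluates;
      (eapply evaluates_call; [reflexivity | | apply IH]);
      unfold child_args; rewrite <- (nQ_pred m); solve_evaluates.
Qed.

Lemma refute_call_evaluates (m : nat) :
  evaluates_to tds_refuter [nQ m; lam; t; a; b]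
    (ECall 3 [EVar 0; EConst 0; EConst 1; EVar 1; EVar 2; EVar 3; EVar 4])
    (Q_of_bool (refutesb lam t a b m 0 1)).
Proof. eapply evaluates_call; [reflexivity | | apply refute_body_evaluates]. solve_evaluates. Qed.

Lemma search_args_evaluate (m : nat) :
  evaluates_all_to tds_refuter [nQ m; lam; t; a; b]
    [EAdd (EVar 0) (EConst 1); EVar 1; EVar 2; EVar 3; EVar 4] [nQ (S m); lam; t; a; b].
Proof. rewrite <- nQ_succ. solve_evaluates. Qed.

Lemma search_halts (d : nat) : forall m,
  refutesb lam t a b (m + d) 0 1 = true ->
  evaluates_to tds_refuter [nQ m; lam; t; a; b] search_body 0.
Proof.
  induction d as [|d IH]; intros m Hd;
    apply (evaluates_if _ _ _ _ _ _ _ (refute_call_evaluates m));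
    rewrite Qeq_bool_Q_of_bool; destruct (refutesb lam t a b m 0 1) eqn:Hm; cbn [negb];
    try apply evaluates_const.
  - rewrite Nat.add_0_r in Hd. congruence.
  - eapply evaluates_call; [reflexivity | apply search_args_evaluate | apply IH].
    now replace (S m + d)%nat with (m + S d)%nat by lia.
Qed.

Lemma search_sound (k : nat) : forall m v,
  eval k tds_refuter [nQ m; lam; t; a; b] search_body = Some v ->
  exists m', refutesb lam t a b m' 0 1 = true.
Proof.
  induction k as [|k IH]; intros m v H; [discriminate |].
  apply eval_if_inv in H as [x [Hx H]].
  rewrite (evaluates_to_det _ _ _ _ _ _ (refute_call_evaluates m) Hx),
    Qeq_bool_Q_of_bool in H.
  destruct (refutesb lam t a b m 0 1) eqn:Hm; [now exists m |]. cbn [negb] in H.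
  destruct k as [|k]; [discriminate |].
  apply eval_call_inv in H as [body [vs [Hbody [Hargs H]]]].
  injection Hbody as <-.
  rewrite (evaluates_all_to_det _ _ _ _ _ _ (search_args_evaluate m) Hargs) in H.
  exact (IH (S m) v (eval_S _ _ _ _ _ H)).
Qed.

Lemma tds_refuter_halts_iff :
  halts tds_refuter [lam; t; a; b] <->
  validb lam = true /\ exists m, refutesb lam t a b m 0 1 = true.
Proof.
  assert (Hvalid : evaluates_to tds_refuter [lam; t; a; b] valid_expr (Q_of_bool (validb lam)))
    by (unfold valid_expr, validb; solve_evaluates).
  split.
  - intros [k [v H]]. change (eval k tds_refuter [lam; t; a; b] entry_body = Some v) in H.
    destruct k as [|k]; [discriminate |].
    apply eval_if_inv in H as [x [Hx H]].
    rewrite (evaluates_to_det _ _ _ _ _ _ Hvalid Hx), Qeq_bool_Q_of_bool in H.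
    destruct (validb lam); cbn [negb] in H; [| now rewrite diverge_none in H].
    split; [reflexivity |].
    destruct k as [|k]; [discriminate |].
    apply eval_call_inv in H as [body [vs [Hbody [Hargs H]]]].
    injection Hbody as <-.
    assert (Hinit : evaluates_all_to tds_refuter [lam; t; a; b]
                      [EConst 0; EVar 0; EVar 1; EVar 2; EVar 3] [nQ 0; lam; t; a; b])
      by solve_evaluates.
    rewrite (evaluates_all_to_det _ _ _ _ _ _ Hinit Hargs) in H.
    exact (search_sound k 0 v H).
  - intros [Hv [m Hm]].
    assert (Hentry : evaluates_to tds_refuter [lam; t; a; b] entry_body 0).
    { apply (evaluates_if _ _ _ _ _ _ _ Hvalid). rewrite Qeq_bool_Q_of_bool, Hv; cbn [negb].
      eapply evaluates_call; [reflexivity | | exact (search_halts m 0 Hm)]. solve_evaluates. }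
    destruct Hentry as [k Hk]. now exists k, 0.
Qed.

End Refuter.

Theorem proposition11 :
  re_set4 (fun lam t a b =>
    tds_valid_instance lam /\ ~ tds_has_solution lam t a b).
Proof.
  exists tds_refuter. intros lam t a b.
  rewrite tds_refuter_halts_iff, validb_iff.
  split; intros [Hv H]; split; try exact Hv; apply (tds_unsolvable_iff_refutable _ _ _ _ Hv), H.
Qed.
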